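(* Let $a,b,c\in\mathbb{R}$ with $a+c=b$, and let $\rho=\max\{|a|,|b|,|c|\}$ satisfy $0<\rho<24/35$. Let $D_\rho=\det\begin{pmatrix}2+a&1+b\\1+b&2+c\end{pmatrix}$ and let $M_\rho=\min\{Q_\rho(s,t):(s,t)\in\mathbb{Z}^2\setminus\{(0,0)\}\}$, where $Q_\rho(s,t)=(2+a)s^2+2(1+b)st+(2+c)t^2$. Then $D_\rho^{-1/2}M_\rho<2\cdot 3^{-1/2}$. *)

From HB Require Import structures.
From mathcomp Require Import all_boot all_order all_algebra.
From mathcomp Require Import boolp classical_sets reals.
Set Implicit Arguments. Unset Strict Implicit. Unset Printing Implicit Defensive.
Import Order.TTheory GRing.Theory Num.Theory.
Local Open Scope ring_scope.
Local Open Scope classical_set_scope.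

Definition rho_of (R : realType) (a b c : R) : R :=
  Num.max `|a| (Num.max `|b| `|c|).

Definition Qrho (R : realType) (a b c : R) (s t : int) : R :=
  (2 + a) * (s%:~R) ^+ 2 + 2 * (1 + b) * s%:~R * t%:~R + (2 + c) * (t%:~R) ^+ 2.

Definition Drho (R : realType) (a b c : R) : R :=
  \det (\matrix_(i < 2, j < 2)
          (if (i == 0%N :> nat) && (j == 0%N :> nat) then 2 + a
           else if (i == 1%N :> nat) && (j == 1%N :> nat) then 2 + c
           else 1 + b)).

(* M_rho = min of Q_rho over Z^2 \ {(0,0)}, taken as the infimum
   (the minimum is attained since Q_rho is positive definite) *)
Definition Mrho (R : realType) (a b c : R) : R :=
  inf [set Qrho a b c p.1 p.2 | p in [set p : int * int | p != (0, 0)]].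

(* With [a + c = b], put [x = a], [y = c], [z = -b], so that [x + y + z = 0]
   and [2 D = 6 - (x^2 + y^2 + z^2)].  The form takes the values [2 + x],
   [2 + y], [2 + z] at [(1,0)], [(0,1)], [(1,-1)].  If [x] is the smallest of
   the three, then [x < 0] and [y^2 + z^2 <= 5 x^2], whence
   [3 (2 + x)^2 < 4 D] as soon as [-4/5 < x]; so the minimum [M] satisfies
   [3 M^2 < 4 D]. *)
From HB Require Import structures.
From mathcomp Require Import all_boot all_order all_algebra.
From mathcomp Require Import boolp classical_sets reals.
From mathcomp Require Import ring lra.

Set Implicit Arguments.
Unset Strict Implicit.
Unset Printing Implicit Defensive.
Import Order.TTheory GRing.Theory Num.Theory.
Local Open Scope ring_scope.

Lemma pdef_quad_ge0 (R : realDomainType) (A B C x y : R) :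
  0 < A -> 0 <= A * C - B ^+ 2 -> 0 <= A * x ^+ 2 + 2 * B * x * y + C * y ^+ 2.
Proof.
move=> A_gt0 disc_ge0; rewrite -(pmulr_rge0 _ A_gt0).
have -> : A * (A * x ^+ 2 + 2 * B * x * y + C * y ^+ 2)
    = (A * x + B * y) ^+ 2 + (A * C - B ^+ 2) * y ^+ 2 by ring.
by rewrite addr_ge0 ?sqr_ge0 // mulr_ge0 ?sqr_ge0.
Qed.

Lemma zero_sum_min_bound (R : realDomainType) (x y z : R) :
  x + y + z = 0 -> x <= y -> x <= z -> x < 0 -> -4 < 5 * x ->
  3 * (2 + x) ^+ 2 + 2 * (x ^+ 2 + y ^+ 2 + z ^+ 2) < 12.
Proof.
move=> sum0 xy xz x_lt0 x_gt.
(* [y^2 + z^2 <= 5 x^2], the extreme case being [y = x], [z = -2x] *)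
have yz_le : 0 <= (y - x) * (z - x) by rewrite mulr_ge0 // subr_ge0.
have x_neg : x * (4 + 5 * x) < 0 by rewrite nmulr_rlt0 //; lra.
have -> : z = - x - y by lra.
nra.
Qed.

Lemma hermite_ratio_lt (R : rcfType) (D v : R) :
  0 < v -> 3 * v ^+ 2 < 4 * D -> (Num.sqrt D)^-1 * v < 2 * (Num.sqrt 3)^-1.
Proof.
move=> v_gt0 hvD.
have D_gt0 : 0 < D by have := sqr_ge0 v; lra.
have sD_gt0 : 0 < Num.sqrt D by rewrite sqrtr_gt0.
have s3_gt0 : 0 < Num.sqrt (3 : R) by rewrite sqrtr_gt0.
rewrite ltr_pdivrMl // mulrA ltr_pdivlMr //.
have -> : v * Num.sqrt 3 = Num.sqrt (v ^+ 2 * 3).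
  by rewrite sqrtrM ?sqr_ge0 // sqrtr_sqr gtr0_norm.
have -> : Num.sqrt D * 2 = Num.sqrt (D * 2 ^+ 2).
  by rewrite sqrtrM ?ltW // sqrtr_sqr gtr0_norm.
by rewrite ltr_sqrt ?mulr_gt0 ?exprn_gt0 //; lra.
Qed.

Section Form.
Variables (R : realType) (a b c : R).

Lemma DrhoE : Drho a b c = (2 + a) * (2 + c) - (1 + b) ^+ 2.
Proof.
rewrite /Drho (expand_det_row _ 0) !big_ord_recl big_ord0 /cofactor.
by rewrite !det_mx11 !mxE /= /bump /= expr0 expr1; ring.
Qed.

Lemma Qrho_ge0 s t : 0 < 2 + a -> 0 < Drho a b c -> 0 <= Qrho a b c s t.
Proof. by rewrite DrhoE => ha hD; apply: pdef_quad_ge0 => //; apply: ltW. Qed.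

Lemma Mrho_le_Qrho s t : 0 < 2 + a -> 0 < Drho a b c -> (s, t) != (0, 0) ->
  Mrho a b c <= Qrho a b c s t.
Proof.
move=> ha hD st_neq0; apply: ge_inf; last by exists (s, t).
by exists 0 => _ [p _ <-]; apply: Qrho_ge0.
Qed.

Lemma DrhoE_sym : a + c = b -> 2 * Drho a b c = 6 - (a ^+ 2 + b ^+ 2 + c ^+ 2).
Proof. by move=> sum_ac; rewrite DrhoE -sum_ac; ring. Qed.

Lemma Qrho10 : Qrho a b c 1 0 = 2 + a.
Proof. by rewrite /Qrho /= mulr1z mulr0z; ring. Qed.

Lemma Qrho01 : Qrho a b c 0 1 = 2 + c.
Proof. by rewrite /Qrho /= mulr1z mulr0z; ring. Qed.

Lemma Qrho1N1 : a + c = b -> Qrho a b c 1 (-1) = 2 - b.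
Proof. by move=> sum_ac; rewrite /Qrho /= mulr1z mulrN1z -sum_ac; ring. Qed.

Lemma short_vector_exists :
  a + c = b ->
  0 < rho_of a b c -> rho_of a b c < 4 / 5 ->
  exists s t, [/\ (s, t) != (0, 0), 0 < Qrho a b c s t
                & 3 * Qrho a b c s t ^+ 2 < 4 * Drho a b c].
Proof.
move=> sum_ac rho_gt0 rho_lt.
have : `|a| < 4 / 5 /\ `|b| < 4 / 5 /\ `|c| < 4 / 5.
  by move: rho_lt; rewrite /rho_of !gt_max => /andP[-> /andP[-> ->]].
move=> [/ltr_normlP [ha1 ha2] [/ltr_normlP [hb1 hb2] /ltr_normlP [hc1 hc2]]].
have not_all0 : a < 0 \/ c < 0 \/ 0 < b.
  case: (ltP a 0) => [|a_ge0]; first by left.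
  case: (ltP c 0) => [|c_ge0]; first by right; left.
  case: (ltP 0 b) => [|b_le0]; first by right; right.
  suff rho0 : rho_of a b c = 0 by move: rho_gt0; rewrite rho0 ltxx.
  have [-> -> ->] : [/\ a = 0, b = 0 & c = 0] by split; lra.
  by rewrite /rho_of normr0 !maxxx.
have hD := DrhoE_sym sum_ac.
have [/andP [ac ab] | ] := boolP ((a <= c) && (a <= - b)).
  exists 1, 0; rewrite Qrho10; split => //; first lra.
  have : 3 * (2 + a) ^+ 2 + 2 * (a ^+ 2 + c ^+ 2 + (- b) ^+ 2) < 12.
    by apply: zero_sum_min_bound; lra.
  rewrite sqrrN; lra.
rewrite negb_and -!ltNge => ca_or_ba.
have [/andP [ca cb] | ] := boolP ((c <= a) && (c <= - b)).
  exists 0, 1; rewrite Qrho01; split => //; first lra.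
  have : 3 * (2 + c) ^+ 2 + 2 * (c ^+ 2 + a ^+ 2 + (- b) ^+ 2) < 12.
    by apply: zero_sum_min_bound; lra.
  rewrite sqrrN; lra.
rewrite negb_and -!ltNge => ac_or_bc.
exists 1, (-1); rewrite Qrho1N1 //; split => //; first lra.
have : 3 * (2 - b) ^+ 2 + 2 * ((- b) ^+ 2 + a ^+ 2 + c ^+ 2) < 12.
  by apply: zero_sum_min_bound; lra.
rewrite sqrrN; lra.
Qed.

End Form.

Theorem mainTheorem10 (R : realType) (a b c : R) :
  a + c = b ->
  0 < rho_of a b c -> rho_of a b c < 24 / 35 ->
  (Num.sqrt (Drho a b c))^-1 * Mrho a b c < 2 * (Num.sqrt 3)^-1.
Proof.
move=> sum_ac rho_gt0 rho_lt.
have rho_lt45 : rho_of a b c < 4 / 5 by lra.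
have [s [t [st_neq0 Q_gt0 hQ]]] := short_vector_exists sum_ac rho_gt0 rho_lt45.
have ha : 0 < 2 + a.
  have : `|a| <= rho_of a b c by rewrite /rho_of le_max lexx.
  move=> /ler_normlP [ha _]; lra.
have hD : 0 < Drho a b c by have := sqr_ge0 (Qrho a b c s t); lra.
apply: le_lt_trans (hermite_ratio_lt Q_gt0 hQ).
by rewrite ler_wpM2l ?invr_ge0 ?sqrtr_ge0 // Mrho_le_Qrho.
Qed.
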